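(* Let $\mathsf k$ be a field, $t>2$, and $Y$ a $t$-connected ladder with lower outside corners $S_w=(a_{w-1},b_w)$, $w=1,\dots,h+1$, and let $\mathfrak X=X_{S_1}\cdots X_{S_{h+1}}$. Let $\psi,\chi\colon\mathsf k[Y]_{\mathfrak X}\to\mathsf k[Y]_{\mathfrak X}$ be the $\mathsf k$-algebra homomorphisms defined on variables $X_{ij}\in Y$ by $$\psi(X_{ij})=X_{ij}+\sum_{\substack{r\ge1\\ u_1<\cdots<u_r\in U(i,j)}}\frac{X_{a_{u_1-1},j}X_{a_{u_2-1},b_{u_1}}\cdots X_{a_{u_r-1},b_{u_{r-1}}}X_{i,b_{u_r}}}{X_{S_{u_1}}X_{S_{u_2}}\cdots X_{S_{u_r}}},$$ $$\chi(X_{ij})=X_{ij}+\sum_{\substack{r\ge1\\ u_1<\cdots<u_r\in U(i,j)}}(-1)^r\frac{X_{a_{u_1-1},j}X_{a_{u_2-1},b_{u_1}}\cdots X_{a_{u_r-1},b_{u_{r-1}}}X_{i,b_{u_r}}}{X_{S_{u_1}}X_{S_{u_2}}\cdots X_{S_{u_r}}},$$ where $U(i,j)=\{w\in\mathbb N\mid i>a_{w-1}\text{ and }j>b_w\}$. Then $\psi$ and $\chi$ are mutually inverse automorphisms of $\mathsf k[Y]_{\mathfrak X}$.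
   Context: Let $X=(X_{ij})$ be an $m\times n$ matrix of indeterminates; identify $X_{pq}$ with $(p,q)$. A ladder is a subset $Y$ of the entries of $X$ such that whenever $X_{ij},X_{pq}\in Y$ with $i\le p$, $j\le q$, also $X_{iq},X_{pj}\in Y$; $X$ is the smallest matrix containing $Y$ and every row and column of $X$ meets $Y$. A subladder is a subset of $Y$ that is itself a ladder. A $t$-minor of $Y$ is a $t\times t$ minor of $X$ with all entries in $Y$. $Y$ is $t$-disconnected if there are nonempty subladders $Y',Y''$ with $Y=Y'\sqcup Y''$ and every $t$-minor of $Y$ in $Y'$ or $Y''$; otherwise $t$-connected. A lower outside corner of $Y$ is a point $(p,q)\in Y$ with $(p-1,q)\notin Y$ and $(p,q-1)\notin Y$; these are listed as $S_1,\dots,S_{h+1}$ in order of increasing row index (so decreasing column index) and written $S_w=(a_{w-1},b_w)$; $X_{S_w}$ is the variable at $S_w$. $\mathsf k[Y]$ is the polynomial ring in the variables of $Y$; all variables appearing in the formulas for $\psi,\chi$ lie in $Y$, and $\psi(X_{S_w})=\chi(X_{S_w})=X_{S_w}$ since $U(S_w)=\varnothing$. *)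

From HB Require Import structures.
From mathcomp Require Import all_boot all_order all_algebra.
Set Implicit Arguments. Unset Strict Implicit. Unset Printing Implicit Defensive.
Import Order.TTheory GRing.Theory Num.Theory.
Local Open Scope ring_scope.

(* Entries of the m x n matrix X are pairs (p,q) : 'I_m * 'I_n (0-based). *)

Definition ladder_closed (m n : nat) (Y : {set 'I_m * 'I_n}) : Prop :=
  forall (i p : 'I_m) (j q : 'I_n),
    (i, j) \in Y -> (p, q) \in Y -> (i <= p)%N -> (j <= q)%N ->
    (i, q) \in Y /\ (p, j) \in Y.

(* Y is a ladder whose ambient matrix is X (every row/column of X meets Y) *)
Definition is_ladder (m n : nat) (Y : {set 'I_m * 'I_n}) : Prop :=
  ladder_closed Y /\
  (forall i : 'I_m, exists j : 'I_n, (i, j) \in Y) /\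
  (forall j : 'I_n, exists i : 'I_m, (i, j) \in Y).

(* a t-minor of Y: rows R, columns C, |R| = |C| = t, all entries in Y;
   "the minor lies in Z" means all its entries lie in Z *)
Definition is_tminor (m n t : nat) (Y : {set 'I_m * 'I_n})
  (R : {set 'I_m}) (C : {set 'I_n}) : Prop :=
  #|R| = t /\ #|C| = t /\ setX R C \subset Y.

Definition t_disconnected (m n t : nat) (Y : {set 'I_m * 'I_n}) : Prop :=
  exists Y1 Y2 : {set 'I_m * 'I_n},
    Y1 != set0 /\ Y2 != set0 /\ ladder_closed Y1 /\ ladder_closed Y2 /\
    Y1 :&: Y2 = set0 /\ Y1 :|: Y2 = Y /\
    (forall R C, is_tminor t Y R C ->
       setX R C \subset Y1 \/ setX R C \subset Y2).

Definition t_connected (m n t : nat) (Y : {set 'I_m * 'I_n}) : Prop :=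
  ~ t_disconnected t Y.

(* lower outside corner: (p,q) in Y, (p-1,q) not in Y, (p,q-1) not in Y
   (a nonexistent position counts as not in Y) *)
Definition lower_outside_corner (m n : nat) (Y : {set 'I_m * 'I_n})
  (s : 'I_m * 'I_n) : bool :=
  [&& s \in Y,
      ~~ [exists p : 'I_m, ((val p).+1 == val s.1) && ((p, s.2) \in Y)] &
      ~~ [exists q : 'I_n, ((val q).+1 == val s.2) && ((s.1, q) \in Y)]].

(* c : 'I_(h+1) -> corners, with c k = S_{k+1} = (a_k, b_{k+1}) of the paper *)
Definition corners_listing (m n h : nat) (Y : {set 'I_m * 'I_n})
  (c : 'I_h.+1 -> 'I_m * 'I_n) : Prop :=
  (forall k l : 'I_h.+1, (k < l)%N -> (val (c k).1 < val (c l).1)%N) /\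
  (forall s, lower_outside_corner Y s = (s \in [set c k | k : 'I_h.+1])).

(* U(i,j), 0-based: { k | i > a_k and j > b_{k+1} } *)
Definition Uset (m n h : nat) (c : 'I_h.+1 -> 'I_m * 'I_n)
  (i : 'I_m) (j : 'I_n) : {set 'I_h.+1} :=
  [set k | (val (c k).1 < val i)%N && (val (c k).2 < val j)%N].

(* For u_1 < ... < u_r (the sorted list s):
   numerator   X_{a_{u1-1},j} X_{a_{u2-1},b_{u1}} ... X_{a_{ur-1},b_{u_{r-1}}} X_{i,b_{ur}}
   denominator X_{S_{u1}} ... X_{S_{ur}} *)
Definition chain_num (A : comUnitRingType) (m n h : nat)
  (c : 'I_h.+1 -> 'I_m * 'I_n) (x : 'I_m -> 'I_n -> A)
  (i : 'I_m) (j : 'I_n) (s : seq 'I_h.+1) : A :=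
  \prod_(p <- zip (rcons [seq (c k).1 | k <- s] i) (j :: [seq (c k).2 | k <- s]))
     x p.1 p.2.

Definition chain_den (A : comUnitRingType) (m n h : nat)
  (c : 'I_h.+1 -> 'I_m * 'I_n) (x : 'I_m -> 'I_n -> A) (s : seq 'I_h.+1) : A :=
  \prod_(k <- s) x (c k).1 (c k).2.

(* generic substitution: e = 1 gives psi, e = -1 gives chi.
   The subsets K of U(i,j) are enumerated in increasing order by enum K. *)
Definition subst_map (A : comUnitRingType) (e : A) (m n h : nat)
  (c : 'I_h.+1 -> 'I_m * 'I_n) (x : 'I_m -> 'I_n -> A) : 'I_m -> 'I_n -> A :=
  fun i j => x i j +
    \sum_(K : {set 'I_h.+1} | (K != set0) && (K \subset Uset c i j))
       e ^+ #|K| * (chain_num c x i j (enum K) / chain_den c x (enum K)).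

Definition psi_map (A : comUnitRingType) (m n h : nat)
  (c : 'I_h.+1 -> 'I_m * 'I_n) (x : 'I_m -> 'I_n -> A) := subst_map 1 c x.
Definition chi_map (A : comUnitRingType) (m n h : nat)
  (c : 'I_h.+1 -> 'I_m * 'I_n) (x : 'I_m -> 'I_n -> A) := subst_map (-1) c x.

(* Let y = subst_map e c x, with x invertible at the corners.  Splitting a
   nonempty chain in U(i,j) at its last element u, the chains below u are
   exactly the chains in U(a_(u-1), j); splitting at its first element, the
   chains above u are those in U(i, b_u).  Hence
     y_ij = x_ij + e * sum_(u in U(i,j)) y_(a_(u-1), j) * x_(i, b_u) / x_(S_u)
          = x_ij + e * sum_(u in U(i,j)) x_(a_(u-1), j) / x_(S_u) * y_(i, b_u),
   and y agrees with x at the corners since U(S_w) is empty.  Applying the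
   first recursion to subst_map (-e) c y and inducting on |U(i,j)|, it cancels
   against the second recursion for y, so subst_map (-e) c y = x. *)

From HB Require Import structures.
From mathcomp Require Import all_boot all_order all_algebra ring.
Import GRing.Theory.
Set Implicit Arguments. Unset Strict Implicit. Unset Printing Implicit Defensive.
Local Open Scope ring_scope.

Section OrdinalSetEnum.
Variable N : nat.
Implicit Types (K : {set 'I_N}) (u : 'I_N).

Lemma sorted_enum_ord_set K : sorted (relpre val ltn) (enum K).
Proof.
rewrite /enum_mem -enumT.
apply: (subseq_sorted (relpre_trans ltn_trans) (filter_subseq _ _)).
by rewrite -(@sorted_map _ _ val) val_enum_ord iota_ltn_sorted.
Qed.

Lemma enum_setU1_max K u : K \subset [set k : 'I_N | (k < u)%N] ->
  enum (u |: K) = rcons (enum K) u.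
Proof.
move=> /subsetP ltKu.
apply: (irr_sorted_eq (relpre_trans ltn_trans) (fun k : 'I_N => ltnn k)).
- exact: sorted_enum_ord_set.
- rewrite -rev_sorted rev_rcons /= path_sortedE; last first.
    by move=> a b d lt_ba lt_db; exact: ltn_trans lt_db lt_ba.
  rewrite rev_sorted sorted_enum_ord_set andbT.
  by apply/allP => k; rewrite mem_rev mem_enum => /ltKu; rewrite inE.
- by move=> k; rewrite mem_enum mem_rcons !inE mem_enum.
Qed.

Lemma enum_setU1_min K u : K \subset [set k : 'I_N | (u < k)%N] ->
  enum (u |: K) = u :: enum K.
Proof.
move=> /subsetP ltuK.
apply: (irr_sorted_eq (relpre_trans ltn_trans) (fun k : 'I_N => ltnn k)).
- exact: sorted_enum_ord_set.
- rewrite /= (path_sortedE (relpre_trans ltn_trans)) sorted_enum_ord_set andbT.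
  by apply/allP => k; rewrite mem_enum => /ltuK; rewrite inE.
- by move=> k; rewrite mem_enum !inE mem_enum.
Qed.

End OrdinalSetEnum.

Section SubsetsByMax.
Variables (R : Type) (idx : R) (op : Monoid.com_law idx).
Variables (T : finType) (r : T -> nat).
Hypothesis r_inj : injective r.

Lemma big_nonempty_subsets_by_max (U : {set T}) (F : {set T} -> R) :
  \big[op/idx]_(K : {set T} | (K != set0) && (K \subset U)) F K =
  \big[op/idx]_(u in U)
     \big[op/idx]_(K : {set T} | K \subset U :&: [set k | (r k < r u)%N]) F (u |: K).
Proof.
pose is_max u (K : {set T}) := [&& u \in K, K \subset U & [forall k in K, (r k <= r u)%N]].
have max_uniq K u v : is_max u K -> is_max v K -> u = v.
  case/and3P=> uK _ /forall_inP uM /and3P[vK _ /forall_inP vM].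
  by apply: r_inj; apply/eqP; rewrite eqn_leq uM ?vM.
transitivity (\big[op/idx]_(K : {set T} | (K != set0) && (K \subset U))
               \big[op/idx]_(u | is_max u K) F K).
  apply: eq_bigr => K /andP[/set0Pn[k0 k0K] KU].
  have [u uK uM] := arg_maxnP r k0K.
  have Mu : is_max u K by apply/and3P; split=> //; apply/forall_inP.
  rewrite (big_pred1 u) // => v; apply/idP/eqP => [Mv|->//].
  exact: max_uniq Mv Mu.
rewrite (exchange_big_dep (mem U)) /=; last first.
  by move=> K u _ /and3P[uK /subsetP KU _]; exact: KU.
apply: eq_bigr => u uU.
rewrite (reindex_onto (fun K => u |: K) (fun K => K :\ u)) /=; last first.
  by move=> K /andP[_ /and3P[uK _ _]]; rewrite setD1K.
apply: eq_bigl => K; apply/idP/idP.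
- case/andP=> /and4P[_ _ /subsetP KU /forall_inP KM] /eqP <-.
  apply/subsetP => k /setD1P[ku kuK].
  rewrite !inE KU //= ltn_neqAle KM // andbT.
  by apply: contra ku => /eqP /r_inj ->.
- move=> /subsetP KU; have uK : u \notin K by apply/negP => /KU; rewrite !inE ltnn andbF.
  have uKU : u |: K \subset U.
    by apply/subsetP => k; rewrite !inE => /orP[/eqP-> //|/KU]; rewrite !inE => /andP[].
  have uK0 : u |: K != set0 by apply/set0Pn; exists u; rewrite setU11.
  rewrite setU1K // eqxx andbT uK0 uKU /is_max setU11 uKU /=.
  apply/forall_inP => k; rewrite !inE => /orP[/eqP-> //|/KU].
  by rewrite !inE => /andP[_ /ltnW].
Qed.

End SubsetsByMax.

Lemma big_nonempty_subsets_by_min (R : Type) (idx : R) (op : Monoid.com_law idx)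
    (N : nat) (U : {set 'I_N}) (F : {set 'I_N} -> R) :
  \big[op/idx]_(K : {set 'I_N} | (K != set0) && (K \subset U)) F K =
  \big[op/idx]_(u in U)
     \big[op/idx]_(K : {set 'I_N} | K \subset U :&: [set k : 'I_N | (u < k)%N]) F (u |: K).
Proof.
have rev_inj : injective (fun k : 'I_N => val (rev_ord k)).
  by move=> a b /val_inj /rev_ord_inj.
rewrite (big_nonempty_subsets_by_max op rev_inj); apply: eq_bigr => u _.
apply: eq_bigl => K; congr (_ \subset _ :&: _); apply/setP => k.
by rewrite !inE /= ltn_sub2lE.
Qed.

Section Chains.
Variables (A : comUnitRingType) (m n h : nat) (c : 'I_h.+1 -> 'I_m * 'I_n).
Implicit Types (y : 'I_m -> 'I_n -> A) (e : A) (i : 'I_m) (j : 'I_n) (u : 'I_h.+1)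
  (s : seq 'I_h.+1) (K : {set 'I_h.+1}).

Definition chain_term e y i j K : A :=
  e ^+ #|K| * (chain_num c y i j (enum K) / chain_den c y (enum K)).

Lemma subst_mapE e y i j : subst_map e c y i j = y i j +
  \sum_(K : {set 'I_h.+1} | (K != set0) && (K \subset Uset c i j)) chain_term e y i j K.
Proof. by []. Qed.

Lemma subst_map_sum e y i j :
  subst_map e c y i j = \sum_(K : {set 'I_h.+1} | K \subset Uset c i j) chain_term e y i j K.
Proof.
rewrite subst_mapE [RHS](bigD1 set0) ?sub0set //=; congr (_ + _).
  rewrite /chain_term cards0 enum_set0 /chain_num /chain_den.
  by rewrite big_seq1 big_nil invr1 mulr1 mul1r.
by apply: eq_bigl => K; rewrite andbC.
Qed.

Lemma chain_num_cons y i j u s :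
  chain_num c y i j (u :: s) = y (c u).1 j * chain_num c y i (c u).2 s.
Proof. by rewrite /chain_num /= big_cons. Qed.

Lemma chain_num_rcons y i j u s :
  chain_num c y i j (rcons s u) = chain_num c y (c u).1 j s * y i (c u).2.
Proof.
rewrite /chain_num !map_rcons -rcons_cons zip_rcons ?size_rcons /= ?size_map //.
by rewrite -cats1 big_cat big_seq1.
Qed.

Lemma chain_den_cons y u s :
  chain_den c y (u :: s) = y (c u).1 (c u).2 * chain_den c y s.
Proof. by rewrite /chain_den big_cons. Qed.

Lemma chain_den_rcons y u s :
  chain_den c y (rcons s u) = chain_den c y s * y (c u).1 (c u).2.
Proof. by rewrite /chain_den -cats1 big_cat big_seq1. Qed.

Variable y : 'I_m -> 'I_n -> A.
Hypothesis y_corner_unit : forall k, y (c k).1 (c k).2 \is a GRing.unit.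

Lemma chain_den_unit s : chain_den c y s \is a GRing.unit.
Proof.
elim: s => [|u s IHs]; first by rewrite /chain_den big_nil unitr1.
by rewrite chain_den_cons unitrM y_corner_unit IHs.
Qed.

Lemma chain_term_setU1_max e i j u K : K \subset [set k : 'I_h.+1 | (k < u)%N] ->
  chain_term e y i j (u |: K) =
  e * (chain_term e y (c u).1 j K * (y i (c u).2 / y (c u).1 (c u).2)).
Proof.
move=> ltKu; have uK : u \notin K by apply/negP => /(subsetP ltKu); rewrite inE ltnn.
rewrite /chain_term enum_setU1_max // cardsU1 uK chain_num_rcons chain_den_rcons.
by rewrite invrM ?chain_den_unit ?y_corner_unit // exprS; ring.
Qed.

Lemma chain_term_setU1_min e i j u K : K \subset [set k : 'I_h.+1 | (u < k)%N] ->
  chain_term e y i j (u |: K) =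
  e * (y (c u).1 j / y (c u).1 (c u).2 * chain_term e y i (c u).2 K).
Proof.
move=> ltuK; have uK : u \notin K by apply/negP => /(subsetP ltuK); rewrite inE ltnn.
rewrite /chain_term enum_setU1_min // cardsU1 uK chain_num_cons chain_den_cons.
by rewrite invrM ?chain_den_unit ?y_corner_unit // exprS; ring.
Qed.

End Chains.

Section Corners.
Variables (A : comUnitRingType) (m n h : nat) (c : 'I_h.+1 -> 'I_m * 'I_n).
Hypothesis corner_rows_incr : forall k l : 'I_h.+1, (k < l)%N -> ((c k).1 < (c l).1)%N.
Hypothesis corner_cols_decr : forall k l : 'I_h.+1, (k < l)%N -> ((c l).2 < (c k).2)%N.
Implicit Types (y : 'I_m -> 'I_n -> A) (e : A) (i : 'I_m) (j : 'I_n) (u : 'I_h.+1).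

Lemma corner_row_leq (k l : 'I_h.+1) : (k <= l)%N -> ((c k).1 <= (c l).1)%N.
Proof. by rewrite leq_eqVlt => /orP[/eqP/val_inj->|/corner_rows_incr/ltnW]. Qed.

Lemma corner_col_geq (k l : 'I_h.+1) : (k <= l)%N -> ((c l).2 <= (c k).2)%N.
Proof. by rewrite leq_eqVlt => /orP[/eqP/val_inj->|/corner_cols_decr/ltnW]. Qed.

Lemma Uset_below i j u : u \in Uset c i j ->
  Uset c i j :&: [set k : 'I_h.+1 | (k < u)%N] = Uset c (c u).1 j.
Proof.
rewrite inE => /andP[ui uj]; apply/setP => k; rewrite !inE.
have [ku|uk] := ltnP k u.
  by have rows := corner_rows_incr ku; rewrite (ltn_trans rows ui) rows andbT.
by rewrite andbF ltnNge corner_row_leq.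
Qed.

Lemma Uset_above i j u : u \in Uset c i j ->
  Uset c i j :&: [set k : 'I_h.+1 | (u < k)%N] = Uset c i (c u).2.
Proof.
rewrite inE => /andP[ui uj]; apply/setP => k; rewrite !inE.
have [uk|ku] := ltnP u k.
  by have cols := corner_cols_decr uk; rewrite (ltn_trans cols uj) cols andbT.
by rewrite andbF [(_ < (c u).2)%N]ltnNge corner_col_geq ?andbF.
Qed.

Lemma Uset_corner w : Uset c (c w).1 (c w).2 = set0.
Proof.
apply/setP => k; rewrite !inE.
have [kw|wk] := ltnP k w; last by rewrite ltnNge corner_row_leq.
by rewrite [(_ < (c w).2)%N]ltnNge corner_col_geq ?andbF // ltnW.
Qed.

Lemma subst_map_corner e y w : subst_map e c y (c w).1 (c w).2 = y (c w).1 (c w).2.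
Proof.
by rewrite subst_mapE Uset_corner big_pred0 ?addr0 // => K; rewrite subset0 andNb.
Qed.

Lemma subst_map_rec_max e y : (forall k, y (c k).1 (c k).2 \is a GRing.unit) ->
  forall i j, subst_map e c y i j = y i j +
  \sum_(u in Uset c i j) e * (subst_map e c y (c u).1 j * (y i (c u).2 / y (c u).1 (c u).2)).
Proof.
move=> y_unit i j.
rewrite subst_mapE (big_nonempty_subsets_by_max _ val_inj); congr (_ + _).
apply: eq_bigr => u Uu; rewrite subst_map_sum -(Uset_below Uu) mulr_suml mulr_sumr.
apply: eq_bigr => K KU; rewrite chain_term_setU1_max //.
exact: subset_trans KU (subsetIr _ _).
Qed.

Lemma subst_map_rec_min e y : (forall k, y (c k).1 (c k).2 \is a GRing.unit) ->
  forall i j, subst_map e c y i j = y i j +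
  \sum_(u in Uset c i j) e * (y (c u).1 j / y (c u).1 (c u).2 * subst_map e c y i (c u).2).
Proof.
move=> y_unit i j; rewrite subst_mapE big_nonempty_subsets_by_min; congr (_ + _).
apply: eq_bigr => u Uu; rewrite subst_map_sum -(Uset_above Uu) !mulr_sumr.
apply: eq_bigr => K KU; rewrite chain_term_setU1_min //.
exact: subset_trans KU (subsetIr _ _).
Qed.

Lemma Uset_below_proper i j u : u \in Uset c i j -> Uset c (c u).1 j \proper Uset c i j.
Proof.
move=> Uu; rewrite -(Uset_below Uu) properE subsetIl /=.
by apply/subsetP => /(_ u Uu); rewrite !inE ltnn andbF.
Qed.

Lemma subst_mapNK e x : (forall k, x (c k).1 (c k).2 \is a GRing.unit) ->
  forall i j, subst_map (- e) c (subst_map e c x) i j = x i j.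
Proof.
move=> x_unit i j; set y := subst_map e c x.
have y_corner k : y (c k).1 (c k).2 = x (c k).1 (c k).2 by exact: subst_map_corner.
have y_unit k : y (c k).1 (c k).2 \is a GRing.unit by rewrite y_corner.
have [N] := ubnP #|Uset c i j|; elim: N i => // N IHN i ltUN.
rewrite (subst_map_rec_max _ y_unit) [y i j](subst_map_rec_min _ x_unit).
rewrite -addrA -big_split big1 ?addr0 // => u Uu /=.
rewrite IHN; last exact: leq_trans (proper_card (Uset_below_proper Uu)) ltUN.
by rewrite y_corner /y; ring.
Qed.

End Corners.

Section Ladders.
Variables (m n : nat) (Y : {set 'I_m * 'I_n}).
Hypothesis ladY : is_ladder Y.

Lemma ladder_col_convex (p p' r : 'I_m) (q : 'I_n) :
  (p, q) \in Y -> (p', q) \in Y -> (p <= r <= p')%N -> (r, q) \in Y.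
Proof.
case: ladY => closedY [rowsY _] pqY p'qY /andP[pr rp'].
have [s rsY] := rowsY r.
have [qs|sq] := leqP q s; first by case: (closedY p r q s pqY rsY pr qs).
by case: (closedY r p' s q rsY p'qY rp' (ltnW sq)).
Qed.

Lemma corners_cols_decr h (c : 'I_h.+1 -> 'I_m * 'I_n) : corners_listing Y c ->
  forall k l : 'I_h.+1, (k < l)%N -> ((c l).2 < (c k).2)%N.
Proof.
case=> rows_incr cornersE k l kl.
have corner w : lower_outside_corner Y (c w) by rewrite cornersE imset_f.
have /and3P[lY not_above _] := corner l; have /and3P[kY _ _] := corner k.
rewrite ltnNge; apply/negP => le_kl.
have lt_kl := rows_incr k l kl.
(* Otherwise the cell directly above the corner c l lies in Y. *)
have klY : ((c k).1, (c l).2) \in Y.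
  rewrite [c k]surjective_pairing [c l]surjective_pairing in kY lY.
  by case: ladY => closedY _; case: (closedY _ _ _ _ kY lY (ltnW lt_kl) le_kl).
pose r := Ordinal (leq_ltn_trans (leq_pred (c l).1) (ltn_ord (c l).1)).
have rlY : (r, (c l).2) \in Y.
  rewrite [c l]surjective_pairing in lY.
  by apply: ladder_col_convex klY lY _; rewrite /= leq_pred -ltnS (ltn_predK lt_kl) lt_kl.
by move/existsP: not_above; apply; exists r; rewrite rlY (ltn_predK lt_kl) eqxx.
Qed.

End Ladders.

Unset Implicit Arguments. Set Strict Implicit.

Theorem lemmaA13 (k : fieldType) (A : comUnitAlgType k) (m n t h : nat)
  (Y : {set 'I_m * 'I_n}) (c : 'I_h.+1 -> 'I_m * 'I_n)
  (x : 'I_m -> 'I_n -> A) :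
  (2 < t)%N -> is_ladder Y -> t_connected t Y -> corners_listing Y c ->
  (forall w : 'I_h.+1, x (c w).1 (c w).2 \is a GRing.unit) ->
  (forall w : 'I_h.+1, psi_map c x (c w).1 (c w).2 = x (c w).1 (c w).2 /\
                       chi_map c x (c w).1 (c w).2 = x (c w).1 (c w).2) /\
  (forall (i : 'I_m) (j : 'I_n), (i, j) \in Y ->
     chi_map c (psi_map c x) i j = x i j /\
     psi_map c (chi_map c x) i j = x i j).
Proof.
move=> _ ladY _ cornersY x_unit.
have rows_incr := cornersY.1.
have cols_decr := corners_cols_decr ladY cornersY.
rewrite /psi_map /chi_map; split=> [w|i j _].
  by rewrite !(subst_map_corner rows_incr cols_decr).
split; first exact: (subst_mapNK rows_incr cols_decr 1 x_unit).
by have := subst_mapNK rows_incr cols_decr (-1) x_unit i j; rewrite opprK.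
Qed.
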